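(* Let $f:X\to X$ be a continuous map on a metric space $(X,d)$, let $K\subset X$ be compact and $\alpha\ge0$. Then $h_{\mathrm{est},\mathrm{cov}}(\alpha,K)=h_{\mathrm{est}}(\alpha,K)$.
   Context: Let $K_k:=f^k(K)$ and $f_k:=f|_{K_k}:K_k\to K_{k+1}$; write $f_0^{i}=f_{i-1}\circ\cdots\circ f_0$ and $f_0^{-i}(A)$ for the preimage of a set $A$ under $f_0^i$. A sequence $\mathcal U_\infty=(\mathcal U_k)_{k\ge0}$, where $\mathcal U_k$ is an open cover of $K_k$ (relative topology), is called $(\alpha,K)$-admissible if there is $\varepsilon>0$ with Lebesgue number $L(\mathcal U_k)\ge\varepsilon e^{-\alpha k}$ for all $k$ (the Lebesgue number being the greatest $r>0$ such that every ball of radius $r$ in $K_k$ lies in an element of $\mathcal U_k$). Set $h(f;\mathcal U_\infty)=\limsup_{n\to\infty}\frac1n\log_2\mathcal N\big(\bigvee_{i=0}^n f_0^{-i}\mathcal U_i\big)$, where $\mathcal N$ is the minimal cardinality of a finite subcover and $\bigvee$ denotes the join (all intersections $U_0\cap\cdots\cap U_n$ with $U_i$ from the $i$-th cover). Then $h_{\mathrm{est},\mathrm{cov}}(\alpha,K):=\sup h(f;\mathcal U_\infty)$ over all $(\alpha,K)$-admissible $\mathcal U_\infty$. Estimation entropy: a set $S\subset K$ is $(T,\varepsilon,\alpha,K)$-spanning ($T\in\mathbb Z_{>0}$) if for each $x\in K$ there is $y\in S$ with $d(f^t(x),f^t(y))<\varepsilon e^{-\alpha t}$ for all $t\in\{0,\ldots,T\}$;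 with $s^*_{\mathrm{est}}(T,\varepsilon,\alpha,K)$ the minimal cardinality of such a set, $h_{\mathrm{est}}(\alpha,K)=\lim_{\varepsilon\downarrow0}\limsup_{T\to\infty}\frac1T\log_2 s^*_{\mathrm{est}}(T,\varepsilon,\alpha,K)$. (Equivalently via maximal $(T,\varepsilon,\alpha,K)$-separated sets: $E\subset K$ such that distinct $x,y\in E$ satisfy $d(f^t(x),f^t(y))\ge\varepsilon e^{-\alpha t}$ for some $t\in\{0,\ldots,T\}$.) *)

From Stdlib Require Import List.
From HB Require Import structures.
From mathcomp Require Import all_boot all_order all_algebra.
From mathcomp Require Import all_classical all_reals all_analysis.
Set Implicit Arguments. Unset Strict Implicit. Unset Printing Implicit Defensive.
Import Order.TTheory GRing.Theory Num.Theory.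
Local Open Scope classical_set_scope.
Local Open Scope ring_scope.

Section Defs.
Context {R : realType} {X : Type} (d : X -> X -> R).

Definition is_metric : Prop :=
  [/\ forall x y, 0 <= d x y,
      forall x y, d x y = 0 <-> x = y,
      forall x y, d x y = d y x &
      forall x y z, d x z <= d x y + d y z].

Definition mcontinuous (f : X -> X) : Prop :=
  forall x (e : R), 0 < e -> exists2 delta : R, 0 < delta &
    forall y, d x y < delta -> d (f x) (f y) < e.

Definition mopen (U : set X) : Prop :=
  forall x, U x -> exists2 r : R, 0 < r & forall y, d x y < r -> U y.

Definition mcompact (K : set X) : Prop :=
  forall (I : Type) (V : I -> set X), (forall i, mopen (V i)) ->
    K `<=` \bigcup_i V i ->
    exists s : seq I, K `<=` [set x | exists2 i, In i s & V i x].

Definition elog2 (x : \bar R) : \bar R :=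
  match x with
  | r%:E => if (0 < r)%R then ((ln r / ln 2)%R)%:E else -oo
  | +oo => +oo
  | -oo => -oo
  end%E.

Definition rate (T : nat) (x : \bar R) : \bar R := ((T%:R)^-1)%:E * elog2 x.

Variable f : X -> X.

Definition spanning (T : nat) (eps alpha : R) (K : set X) (S : seq X) : Prop :=
  (forall y, In y S -> K y) /\
  forall x, K x -> exists2 y, In y S &
    forall t : nat, (t <= T)%N ->
      d (iter t f x) (iter t f y) < eps * expR (- alpha * t%:R).

(* minimal cardinality of a (T,eps,alpha,K)-spanning set (+oo if none) *)
Definition s_est (T : nat) (eps alpha : R) (K : set X) : \bar R :=
  ereal_inf [set (size S)%:R%:E | S in spanning T eps alpha K].

Definition h_est_eps (eps alpha : R) (K : set X) : \bar R :=
  limn_esup (fun T : nat => rate T (s_est T eps alpha K)).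

Definition h_est (alpha : R) (K : set X) : \bar R :=
  lim ((fun eps : R => h_est_eps eps alpha K) @ 0^'+).

Definition Kk (K : set X) (k : nat) : set X := iter k f @` K.

Definition rel_open_cover (A : set X) (U : set (set X)) : Prop :=
  (forall W, U W -> exists2 V, mopen V & W = V `&` A) /\
  A `<=` \bigcup_(W in U) W.

Definition lebesgue_number (A : set X) (U : set (set X)) : \bar R :=
  ereal_sup [set r%:E | r in [set r : R | 0 < r /\
    forall x, A x -> exists2 W, U W & [set y | A y /\ d x y < r] `<=` W]].

Definition admissible (alpha : R) (K : set X) (U : nat -> set (set X)) : Prop :=
  (forall k, rel_open_cover (Kk K k) (U k)) /\
  exists2 eps : R, 0 < eps & forall k : nat,
    ((eps * expR (- alpha * k%:R))%:E <= lebesgue_number (Kk K k) (U k))%E.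

(* the join  \/_{i=0}^n f_0^{-i} U_i  (a cover of K) *)
Definition join_cover (K : set X) (U : nat -> set (set X)) (n : nat) : set (set X) :=
  [set W | exists g : nat -> set X, (forall i, (i <= n)%N -> U i (g i)) /\
     W = [set x | K x /\ forall i, (i <= n)%N -> g i (iter i f x)]].

(* minimal cardinality of a finite subcover of A (+oo if none) *)
Definition Ncov (A : set X) (U : set (set X)) : \bar R :=
  ereal_inf [set (size s)%:R%:E | s in [set s : seq (set X) |
     (forall W, In W s -> U W) /\ A `<=` [set x | exists2 W, In W s & W x]]].

Definition h_cov (K : set X) (U : nat -> set (set X)) : \bar R :=
  limn_esup (fun n : nat => rate n (Ncov K (join_cover K U n))).

Definition h_est_cov (alpha : R) (K : set X) : \bar R :=
  ereal_sup [set h_cov K U | U in admissible alpha K].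

End Defs.

From mathcomp Require Import all_boot all_order all_algebra.
From mathcomp Require Import all_classical all_reals all_analysis.
Set Implicit Arguments. Unset Strict Implicit. Unset Printing Implicit Defensive.
Import Order.TTheory GRing.Theory Num.Theory.
Local Open Scope classical_set_scope.
Local Open Scope ring_scope.

(* Spanning sets and covers control each other at every time scale.  If an
   admissible sequence U has Lebesgue numbers at least eps e^{-alpha k}, then
   for e < eps the (e e^{-alpha k})-ball around f^k y lies in an element of
   U_k, so a (T, e, alpha, K)-spanning set S yields a subcover of the join with
   |S| elements: h(U) <= h_est(e) <= h_est.  Conversely, the covers of K_k by
   balls of radius (e/2) e^{-alpha k} are admissible, and one point chosen in
   each element of a subcover of their join is (T, e, alpha, K)-spanning by the
   triangle inequality: h_est(e) <= h(U) <= h_est_cov. *)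

Section EntropyRateMonotone.
Variable R : realType.
Local Open Scope ereal_scope.

Lemma le_elog2 (x y : \bar R) : x <= y -> elog2 x <= elog2 y.
Proof.
case: x => [r||]; case: y => [s||] //=; rewrite ?leey ?leNye // lee_fin => rs.
case: ifPn => r0; last by rewrite leNye.
have s0 : (0 < s)%R by apply: lt_le_trans rs.
rewrite s0 lee_fin ler_pM2r ?invr_gt0 ?ln_gt0 ?ltr1n //.
by rewrite ler_ln ?posrE.
Qed.

Lemma le_rate T (x y : \bar R) : x <= y -> rate T x <= rate T y.
Proof.
by move=> xy; apply: lee_wpmul2l; [rewrite lee_fin invr_ge0|exact: le_elog2].
Qed.

Lemma le_limn_esup (u v : nat -> \bar R) : (forall n, u n <= v n) ->
  limn_esup u <= limn_esup v.
Proof.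
move=> uv; apply: le_ereal_inf_tmp => _ [V FV <-].
apply: (le_trans (ereal_inf_lbound _)); first by exists V.
apply: ge_ereal_sup => _ [n Vn <-].
by apply: (le_trans (uv n)); apply: ereal_sup_ubound; exists n.
Qed.

End EntropyRateMonotone.

Lemma lebesgue_number_ball (R : realType) (X : Type) (d : X -> X -> R)
    (A : set X) (U : set (set X)) (r : R) (x : X) :
  (r%:E < lebesgue_number d A U)%E -> A x ->
  exists2 W, U W & [set y | A y /\ d x y < r] `<=` W.
Proof.
move=> /ereal_sup_gt [_ [s [s0 hs] <-]]; rewrite lte_fin => rs Ax.
have [W UW sW] := hs x Ax; exists W => // y [Ay dxy].
by apply: sW; split => //; apply: lt_trans rs.
Qed.

Lemma seq_representatives (X : Type) (s : seq (set X)) :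
  exists S : seq X, [/\ (size S <= size s)%N,
    forall y, List.In y S -> exists2 W, List.In W s & W y &
    forall W x, List.In W s -> W x -> exists2 y, List.In y S & W y].
Proof.
elim: s => [|W s [S [sizeS SW Sr]]]; first by exists [::].
have [[x Wx]|W0] := pselect (exists x, W x).
- exists (x :: S); split => /=; first by rewrite ltnS.
  + by move=> y [<-|/SW[V Vs Vy]]; [exists W; [left|]|exists V; [right|]].
  + move=> V z [<- _|Vs Vz]; first by exists x; [left|].
    by have [y yS Vy] := Sr V z Vs Vz; exists y; [right|].
- exists S; split => /=; first exact: leqW.
  + by move=> y /SW[V Vs Vy]; exists V; [right|].
  + move=> V z [<- Vz|Vs Vz]; first by case: W0; exists z.
    exact: Sr Vs Vz.
Qed.

Section EstimationEntropy.
Variables (R : realType) (X : Type) (d : X -> X -> R) (f : X -> X).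
Variables (K : set X) (alpha : R).

Lemma le_s_est T (e1 e2 : R) : e1 <= e2 ->
  (s_est d f T e2 alpha K <= s_est d f T e1 alpha K)%E.
Proof.
move=> e12; apply: le_ereal_inf_tmp => _ [S [SK Sspan] <-].
apply: ereal_inf_lbound; exists S => //; split => // x Kx.
have [y yS hy] := Sspan x Kx; exists y => // t tT.
by apply: (lt_le_trans (hy t tT)); rewrite ler_pM2r ?expR_gt0.
Qed.

Lemma le_h_est_eps (e1 e2 : R) : e1 <= e2 ->
  (h_est_eps d f e2 alpha K <= h_est_eps d f e1 alpha K)%E.
Proof. by move=> e12; apply: le_limn_esup => n; apply/le_rate/le_s_est. Qed.

Lemma h_est_eps_cvg : cvg ((fun e : R => h_est_eps d f e alpha K) @ 0^'+).
Proof.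
apply: nonincreasing_at_right_is_cvge; near=> x => a b _ _.
exact: le_h_est_eps.
Unshelve. all: by end_near.
Qed.

Hypothesis hd : is_metric d.

Lemma Ncov_join_le_s_est (U : nat -> set (set X)) (e : R) n :
  (forall k : nat, ((e * expR (- alpha * k%:R))%:E
                     < lebesgue_number d (Kk f K k) (U k))%E) ->
  (Ncov K (join_cover f K U n) <= s_est d f n e alpha K)%E.
Proof.
move=> hU; have [_ _ dC _] := hd.
pose ball_sub y i W := U i W /\ [set z | Kk f K i z /\
  d (iter i f y) z < e * expR (- alpha * i%:R)] `<=` W.
have /choice[G HG] : forall p : X * nat,
    exists W, K p.1 -> ball_sub p.1 p.2 W.
  move=> [y i] /=; have [Ky|nKy] := pselect (K y); last by exists set0.
  have [W UW sW] := lebesgue_number_ball (x:=iter i f y) (hU i)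
    (ex_intro2 _ _ y Ky erefl).
  by exists W.
pose tube y := [set x | K x /\ forall i, (i <= n)%N -> G (y, i) (iter i f x)].
apply: le_ereal_inf_tmp => _ [S [SK Sspan] <-].
apply: ereal_inf_lbound; exists (map tube S); last by rewrite size_map.
split.
- move=> W /List.in_map_iff [y [<- yS]].
  by exists (fun i => G (y, i)); split => // i _; case: (HG (y, i) (SK y yS)).
- move=> x Kx; have [y yS hy] := Sspan x Kx.
  exists (tube y); first exact: List.in_map.
  split => // i ni; apply: (HG (y, i) (SK y yS)).2.
  by split; [exists x|rewrite dC; apply: hy].
Qed.

Lemma h_cov_le_h_est_eps (U : nat -> set (set X)) (eps e : R) :
  (forall k : nat, ((eps * expR (- alpha * k%:R))%:E
                     <= lebesgue_number d (Kk f K k) (U k))%E) ->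
  e < eps -> (h_cov f K U <= h_est_eps d f e alpha K)%E.
Proof.
move=> hU eeps; apply: le_limn_esup => n; apply/le_rate/Ncov_join_le_s_est.
by move=> k; apply: (lt_le_trans _ (hU k)); rewrite lte_fin ltr_pM2r ?expR_gt0.
Qed.

Definition ball_cover (A : set X) (r : R) : set (set X) :=
  [set W | exists2 z, A z & W = [set y | d z y < r] `&` A].

Lemma ball_cover_rel_open (A : set X) (r : R) : 0 < r ->
  rel_open_cover d A (ball_cover A r).
Proof.
move=> r0; have [_ d0 _ dtri] := hd; split.
- move=> W [z _ ->]; exists [set y | d z y < r] => // x /= dzx.
  exists (r - d z x); first by rewrite subr_gt0.
  by move=> y dxy; apply: (le_lt_trans (dtri z x y)); rewrite -ltrBrDl.
- move=> x Ax; exists ([set y | d x y < r] `&` A); first by exists x.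
  by split => //=; rewrite (proj2 (d0 x x) erefl).
Qed.

Lemma lebesgue_number_ball_cover (A : set X) (r : R) : 0 < r ->
  (r%:E <= lebesgue_number d A (ball_cover A r))%E.
Proof.
move=> r0; apply: ereal_sup_ubound; exists r => //; split => // x Ax.
by exists ([set y | d x y < r] `&` A); [exists x|move=> y []].
Qed.

Definition ball_covers (e : R) (k : nat) : set (set X) :=
  ball_cover (Kk f K k) (e / 2 * expR (- alpha * k%:R)).

Lemma ball_covers_admissible (e : R) : 0 < e ->
  admissible d f alpha K (ball_covers e).
Proof.
move=> e0; have r0 k : 0 < e / 2 * expR (- alpha * k%:R).
  by rewrite mulr_gt0 ?expR_gt0 ?divr_gt0.
split; first by move=> k; apply: ball_cover_rel_open.
by exists (e / 2); [rewrite divr_gt0|move=> k; apply: lebesgue_number_ball_cover].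
Qed.

Lemma join_ball_covers_dist (e : R) n W x y t :
  join_cover f K (ball_covers e) n W -> W x -> W y -> (t <= n)%N ->
  d (iter t f x) (iter t f y) < e * expR (- alpha * t%:R).
Proof.
have [_ _ dC dtri] := hd.
move=> [g [gU ->]] [_ hx] [_ hy] tn.
have [z _ gt] := gU t tn; move: (hx t tn) (hy t tn); rewrite gt => -[zx _] [zy _].
apply: (le_lt_trans (dtri _ z _)); rewrite dC.
by rewrite [e in e * _]splitr mulrDl ltrD.
Qed.

Lemma s_est_le_Ncov_join (e : R) n :
  (s_est d f n e alpha K <= Ncov K (join_cover f K (ball_covers e) n))%E.
Proof.
apply: le_ereal_inf_tmp => _ [s [sU scov] <-].
have [S [sizeS SW Sr]] := seq_representatives s.
apply: (le_trans (ereal_inf_lbound _)); first (exists S => //; split).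
- by move=> y /SW[W /sU[g [_ ->]] []].
- move=> x Kx; have [W Ws Wx] := scov x Kx; have [y yS Wy] := Sr W x Ws Wx.
  by exists y => // t; apply: join_ball_covers_dist (sU W Ws) Wx Wy.
- by rewrite lee_fin ler_nat.
Qed.

Lemma h_est_eps_le_h_est_cov (e : R) : 0 < e ->
  (h_est_eps d f e alpha K <= h_est_cov d f alpha K)%E.
Proof.
move=> e0; apply: (le_trans _ (ereal_sup_ubound _)); last first.
  by exists (ball_covers e); first exact: ball_covers_admissible.
by apply: le_limn_esup => n; apply/le_rate/s_est_le_Ncov_join.
Qed.

End EstimationEntropy.

Theorem mainTheorem2 (R : realType) (X : Type) (d : X -> X -> R)
  (hd : is_metric d) (f : X -> X) (hf : mcontinuous d f)
  (K : set X) (hK : mcompact d K) (alpha : R) (halpha : 0 <= alpha) :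
  h_est_cov d f alpha K = h_est d f alpha K.
Proof.
apply/le_anti/andP; split.
- apply: ge_ereal_sup => _ [U [_ [eps eps0 hU]] <-].
  apply: lime_ge; first exact: h_est_eps_cvg.
  near=> e; apply: (h_cov_le_h_est_eps hd hU).
  by near: e; exact: nbhs_right_lt.
- apply: lime_le; first exact: h_est_eps_cvg.
  near=> e; apply: (h_est_eps_le_h_est_cov f K alpha hd).
  by near: e; exact: nbhs_right_gt.
Unshelve. all: by end_near.
Qed.
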